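(* Let $n\ge 2$ be an integer, $p,q\in\mathbb{R}$ with $q>0$, and let $M$ be a real $n\times n$ matrix whose $n^2$ entries are a permutation of the numbers $p, p+q, \dots, p+(n^2-1)q$. Set $$r := \frac pq + \frac{n^2-1}{2},\quad \rho := \frac{n^3+n^2+n+1}{12},\quad \sigma := nq^2\left(r^2 + \frac{n^4-1}{12}\right).$$ Then: if $r^2 < \rho$: $|\det M| \le \sigma^{n/2}$; if $r^2 = \rho$: $|\det M| \le n^n q^n |r| \rho^{\frac{n-1}{2}} = \sigma^{n/2}$; if $r^2 > \rho$: $|\det M| \le n^n q^n |r| \rho^{\frac{n-1}{2}} < \sigma^{n/2}$. *)

From HB Require Import structures.
From mathcomp Require Import all_boot all_order all_algebra.
Set Implicit Arguments. Unset Strict Implicit. Unset Printing Implicit Defensive.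
Import Order.TTheory GRing.Theory Num.Theory.
Local Open Scope ring_scope.

Definition r_of (R : rcfType) (n : nat) (p q : R) : R :=
  p / q + (n%:R ^+ 2 - 1) / 2.
Definition rho_of (R : rcfType) (n : nat) : R :=
  (n%:R ^+ 3 + n%:R ^+ 2 + n%:R + 1) / 12.
Definition sigma_of (R : rcfType) (n : nat) (p q : R) : R :=
  n%:R * q ^+ 2 * (r_of n p q ^+ 2 + (n%:R ^+ 4 - 1) / 12).

(* x^(k/2) for x >= 0, written as (sqrt x)^k. *)
Definition halfpow (R : rcfType) (x : R) (k : nat) : R := Num.sqrt x ^+ k.

(* The entries of M sum to n^2 q r and their squares to n sigma, so Hadamard's
   inequality followed by AM-GM on the squared row norms gives sigma^n as a
   bound for det^2. For r^2 >= rho, reflect the columns of M by the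
   Householder matrix H sending e_0 to (1, ..., 1) / sqrt n: the first row of
   H M^T has squared norm X >= Y := q^2 n^2 r^2, while all squared row norms
   still add up to n sigma = Y + (n - 1) K with K := q^2 n^2 rho. Scaling X by
   K / Y <= 1 before applying AM-GM to the row norms bounds det^2 by
   Y K^(n-1), the square of n^n q^n |r| rho^((n-1)/2). Comparing Y K^(n-1)
   with sigma^n = ((Y + (n - 1) K) / n)^n is AM-GM once more, with equality
   exactly when Y = K, i.e. r^2 = rho. *)

From HB Require Import structures.
From mathcomp Require Import all_boot all_order all_algebra.
From mathcomp Require Import ring lra.
Set Implicit Arguments. Unset Strict Implicit. Unset Printing Implicit Defensive.
Import Order.TTheory GRing.Theory Num.Theory.
Local Open Scope ring_scope.

Section MeanInequalities.

Variable R : rcfType.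

Lemma sqr_sum_le d (x : 'I_d -> R) : (\sum_i x i) ^+ 2 <= d%:R * \sum_i x i ^+ 2.
Proof.
case: d x => [|d] x; first by rewrite !big_ord0 expr0n /= mul0r.
set T := \sum_i x i; set m := T / d.+1%:R.
have d0 : d.+1%:R != 0 :> R by rewrite pnatr_eq0.
have var_ge0 : 0 <= \sum_i (x i - m) ^+ 2 by apply: sumr_ge0 => i _; rewrite sqr_ge0.
have varE : \sum_i (x i - m) ^+ 2 = \sum_i x i ^+ 2 - (m *+ 2) * T + d.+1%:R * m ^+ 2.
  under eq_bigr do rewrite sqrrB.
  rewrite big_split /= big_split /= sumrN sumr_const card_ord -mulr_natl.
  by rewrite sumrMnl -mulr_suml -/T mulr_natl; ring.
rewrite -subr_ge0 (_ : _ - _ = d.+1%:R * \sum_i (x i - m) ^+ 2) ?mulr_ge0 //.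
by rewrite varE /m mulr2n; field; rewrite -natr1 addrC in d0.
Qed.

Lemma prod_le_mean_pow d (c : 'I_d -> R) : (forall i, 0 <= c i) ->
  \prod_i c i <= ((\sum_i c i) / d%:R) ^+ d.
Proof.
by move=> c0; have [+ _] := leif_AGM (A := predT) (fun i _ => c0 i); rewrite card_ord.
Qed.

Lemma amgm_two_lt k (a b : R) : 0 <= a -> 0 <= b -> a != b ->
  k.+2%:R ^+ k.+2 * (a * b ^+ k.+1) < (a + k.+1%:R * b) ^+ k.+2.
Proof.
move=> a0 b0 ab; pose E (i : 'I_k.+2) := if i == ord0 then a else b.
have E0 i : 0 <= E i by rewrite /E; case: ifP.
have := leif_AGM (A := predT) (fun i _ => E0 i); move/lt_leif; rewrite card_ord.
have -> : [forall i in predT, forall j in predT, E i == E j] = false.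
  apply/negbTE/negP => /forallP /(_ ord0) /implyP /(_ isT) /forallP.
  by move=> /(_ (lift ord0 ord0)) /implyP /(_ isT); rewrite /E /= (negbTE ab).
rewrite (big_ord_recl _ E) [X in _ < (X / _) ^+ _](big_ord_recl _ E) /E eqxx /=.
rewrite (eq_bigr (fun _ => b)) // prodr_const card_ord.
rewrite (eq_bigr (fun _ => b)) // sumr_const card_ord mulr_natl => lt_ab.
have d0 : 0 < k.+2%:R :> R by rewrite ltr0n.
rewrite -[X in _ < X ^+ _](@divfK _ k.+2%:R) ?gt_eqF // exprMn mulrC ltr_pM2r //.
by rewrite exprn_gt0.
Qed.

End MeanInequalities.

Section Hadamard.

Variable R : rcfType.

Lemma mulmx_trE m (u : 'rV[R]_m) : (u *m u^T) 0 0 = \sum_j u 0 j ^+ 2.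
Proof. by rewrite mxE; apply: eq_bigr => j _; rewrite mxE expr2. Qed.

Lemma mulmx_tr_ge0 m (u : 'rV[R]_m) : 0 <= (u *m u^T) 0 0.
Proof. by rewrite mulmx_trE sumr_ge0 // => j _; rewrite sqr_ge0. Qed.

Lemma mulmx_tr_eq0 m (u : 'rV[R]_m) : (u *m u^T) 0 0 = 0 -> u = 0.
Proof.
rewrite mulmx_trE => /psumr_eq0P u0; apply/rowP => j; rewrite mxE.
by apply/eqP; rewrite -sqrf_eq0; apply/eqP; apply: u0 => // i _; rewrite sqr_ge0.
Qed.

Lemma sum_sqr_ge0 m (x : 'I_m -> R) : 0 <= \sum_j x j ^+ 2.
Proof. by apply: sumr_ge0 => j _; rewrite sqr_ge0. Qed.

Lemma mx11_trmx (X : 'M[R]_1) : X^T = X.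
Proof. by rewrite [X]mx11_scalar tr_scalar_mx. Qed.

(* Schur complement of the Gram block [G] of the last [k] rows: the remaining
   1x1 block is [|a - w|^2] with [w] the projection of [a] on the row space of
   [B], and [|a - w|^2 = |a|^2 - |w|^2]. *)
Lemma det_gram_schur k m (a : 'rV[R]_m) (B : 'M[R]_(k, m)) :
  B *m B^T \in unitmx ->
  exists2 c, 0 <= c <= (a *m a^T) 0 0 &
    \det (col_mx a B *m (col_mx a B)^T) = c * \det (B *m B^T).
Proof.
set G := B *m B^T => Gunit; set w := a *m B^T *m invmx G *m B.
have Gtr : G^T = G by rewrite /G trmx_mul trmxK.
have wwT : w *m w^T = w *m a^T.
  rewrite /w !trmx_mul trmx_inv Gtr trmxK -!mulmxA.
  by congr (_ *m (_ *m (_ *m _))); rewrite !mulmxA -/G mulmxV // mul1mx.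
have awT : a *m w^T = w *m a^T by rewrite -(trmxK a) -trmx_mul mx11_trmx trmxK.
exists ((a *m a^T - w *m a^T) 0 0).
  apply/andP; split.
    have -> : a *m a^T - w *m a^T = (a - w) *m (a - w)^T.
      by rewrite linearB /= mulmxBl !mulmxBr awT wwT opprB addrA subrK.
    exact: mulmx_tr_ge0.
  by rewrite -wwT mxE [X in _ + X]mxE gerDl oppr_le0 mulmx_tr_ge0.
rewrite tr_col_mx mul_col_row -/G.
have -> : block_mx (a *m a^T) (a *m B^T) (B *m a^T) G =
    block_mx 1%:M (a *m B^T *m invmx G) 0 1%:M *m
    block_mx (a *m a^T - w *m a^T) 0 (B *m a^T) G.
  rewrite mulmx_block !mul1mx !mul0mx ?mulmx0 !add0r ?addr0.
  by rewrite -(mulmxA _ (invmx G) G) mulVmx // mulmx1 /w (mulmxA _ B) subrK.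
by rewrite det_mulmx det_ublock !det1 !mul1r det_lblock det_mx11.
Qed.

Lemma det_gram_bound k m (A : 'M[R]_(k, m)) :
  0 <= \det (A *m A^T) <= \prod_(i < k) \sum_(j < m) A i j ^+ 2.
Proof.
elim: k A => [|k IH] A; first by rewrite det_mx00 big_ord0 ler01 lexx.
have -> : A = col_mx (usubmx (A : 'M_(1 + k, m))) (dsubmx (A : 'M_(1 + k, m))).
  by rewrite vsubmxK.
set a := usubmx _; set B := dsubmx _.
have -> : \prod_(i < 1 + k) \sum_j col_mx a B i j ^+ 2
        = (a *m a^T) 0 0 * \prod_(i < k) \sum_j B i j ^+ 2.
  rewrite big_ord_recl mulmx_trE; congr (_ * _).
    apply: eq_bigr => j _.
    by rewrite (_ : ord0 = lshift k (0 : 'I_1)) ?col_mxEu //; apply: val_inj.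
  apply: eq_bigr => i _; apply: eq_bigr => j _.
  by rewrite (_ : lift ord0 i = rshift 1 i :> 'I_(1 + k)) ?col_mxEd //; apply: val_inj.
have /andP[detG0 detG_le] := IH B.
have [Gunit | Gsing] := boolP (B *m B^T \in unitmx).
  have [c /andP[c0 c_le] ->] := det_gram_schur a Gunit.
  by rewrite mulr_ge0 //= ler_pM.
have /det0P[v vn0 vG] : \det (B *m B^T) == 0.
  by move: Gsing; rewrite unitmxE unitfE negbK.
have vB : v *m B = 0.
  by apply: mulmx_tr_eq0; rewrite trmx_mul -mulmxA (mulmxA B) mulmxA vG mul0mx mxE.
have -> : \det (col_mx a B *m (col_mx a B)^T) = 0.
  apply/eqP/det0P; exists (row_mx (0 : 'rV_1) v).
    by apply: contra vn0 => /eqP; rewrite -row_mx0 => /eq_row_mx[_ ->].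
  by rewrite mulmxA mul_row_col mul0mx vB add0r mul0mx.
by rewrite lexx mulr_ge0 ?mulmx_tr_ge0 // prodr_ge0 // => i _; apply: sum_sqr_ge0.
Qed.

Lemma hadamard_ineq n (A : 'M[R]_n) :
  \det A ^+ 2 <= \prod_(i < n) \sum_(j < n) A i j ^+ 2.
Proof. by have /andP[_] := det_gram_bound A; rewrite det_mulmx det_tr expr2. Qed.

Lemma det_sqr_le_mean_pow n (A : 'M[R]_n) :
  \det A ^+ 2 <= ((\sum_i \sum_j A i j ^+ 2) / n%:R) ^+ n.
Proof.
apply: le_trans (hadamard_ineq A) (prod_le_mean_pow _) => i.
exact: sum_sqr_ge0.
Qed.

End Hadamard.

Section FirstRowSplit.

Variable R : rcfType.

Lemma householder_ones n : exists H : 'M[R]_n.+2,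
  [/\ H *m H^T = 1%:M, H^T = H & forall j, H 0 j = (Num.sqrt n.+2%:R)^-1].
Proof.
set t := (Num.sqrt n.+2%:R)^-1.
have ht2 : t ^+ 2 * n.+2%:R = 1.
  by rewrite exprVn sqr_sqrtr ?ler0n // mulVf // pnatr_eq0.
have t0 : 0 < t by rewrite invr_gt0 sqrtr_gt0 ltr0n.
have t1 : t < 1.
  have : t ^+ 2 < 1 by rewrite -ht2 -[X in X < _]mulr1 ltr_pM2l ?exprn_gt0 // ltr1n.
  by apply: contraTT; rewrite -!leNgt => /exprn_ege1->.
pose v : 'rV[R]_n.+2 := \row_j ((j == 0)%:R - t).
set nv := (v *m v^T) 0 0.
have nvE : nv = 2 - 2 * t.
  rewrite /nv mulmx_trE big_ord_recl /= mxE eqxx.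
  rewrite (eq_bigr (fun _ => t ^+ 2)); last by move=> i _; rewrite mxE /= sub0r sqrrN.
  rewrite sumr_const card_ord -[t ^+ 2 *+ _]mulr_natr.
  have -> : t ^+ 2 * n.+1%:R = 1 - t ^+ 2 by rewrite -[X in _ = X - _]ht2 -natr1; ring.
  by rewrite /=; ring.
have nv0 : nv != 0 by rewrite nvE gt_eqF //; lra.
set c := 2 / nv.
have Htr : (1%:M - c *: (v^T *m v))^T = 1%:M - c *: (v^T *m v).
  by rewrite linearB /= trmx1 linearZ /= trmx_mul trmxK.
exists (1%:M - c *: (v^T *m v)); split=> //.
- have vv : v^T *m v *m (v^T *m v) = nv *: (v^T *m v).
    by rewrite mulmxA -(mulmxA _ v) [v *m _]mx11_scalar mul_mx_scalar -scalemxAl.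
  rewrite Htr mulmxBl !mulmxBr !mul1mx !mulmx1 -!scalemxAl -!scalemxAr scalerA vv scalerA.
  have -> : c * c * nv = c *+ 2 by rewrite -mulrA /c mulfVK // mulr_natr.
  by rewrite -scalerMnl opprB mulr2n addrK subrK.
- move=> j; rewrite !mxE big_ord1 !mxE eqxx /= /c nvE (eq_sym 0 j).
  by field; rewrite gt_eqF //; lra.
Qed.

Lemma det_sqr_orthogonal n (H A : 'M[R]_n) :
  H *m H^T = 1%:M -> \det (H *m A) ^+ 2 = \det A ^+ 2.
Proof.
move=> HHT; have dH : \det H ^+ 2 = 1 by rewrite expr2 -{2}det_tr -det_mulmx HHT det1.
by rewrite det_mulmx exprMn dH mul1r.
Qed.

Lemma sum_sqr_orthogonal m n (H : 'M[R]_m) (A : 'M[R]_(m, n)) :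
  H^T *m H = 1%:M ->
  \sum_i \sum_j (H *m A) i j ^+ 2 = \sum_i \sum_j A i j ^+ 2.
Proof.
have sqE (B : 'M[R]_(m, n)) : \sum_i \sum_j B i j ^+ 2 = \tr (B^T *m B).
  rewrite exchange_big; apply: eq_bigr => j _; rewrite mxE.
  by apply: eq_bigr => i _; rewrite mxE expr2.
by move=> HTH; rewrite !sqE trmx_mul -mulmxA (mulmxA H^T) HTH mul1mx.
Qed.

(* Hadamard's inequality for [H *m N^T], whose first row carries the row sums
   of [N] scaled by [1 / sqrt (n + 2)]. *)
Lemma det_sqr_le_split n (N : 'M[R]_n.+2) :
  exists (X : R) (c : 'I_n.+1 -> R),
   [/\ \det N ^+ 2 <= X * \prod_i c i, forall i, 0 <= c i,
       X + \sum_i c i = \sum_i \sum_j N i j ^+ 2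
     & (\sum_i \sum_j N i j) ^+ 2 <= n.+2%:R ^+ 2 * X].
Proof.
have [H [HHT Htr H0]] := householder_ones n.
set t := (Num.sqrt n.+2%:R)^-1 in H0.
have ht2 : t ^+ 2 * n.+2%:R = 1.
  by rewrite /t exprVn sqr_sqrtr ?ler0n // mulVf // pnatr_eq0.
pose A := H *m N^T; pose rn i := \sum_j A i j ^+ 2.
exists (rn 0), (fun i => rn (lift ord0 i)); split.
- rewrite -big_ord_recl -det_tr -(det_sqr_orthogonal N^T HHT).
  exact: hadamard_ineq.
- by move=> i; apply: sum_sqr_ge0.
- rewrite -big_ord_recl /rn sum_sqr_orthogonal; last by rewrite Htr -{2}Htr.
  by rewrite exchange_big; apply: eq_bigr => i _; apply: eq_bigr => j _; rewrite mxE.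
- have -> : rn ord0 = t ^+ 2 * \sum_j (\sum_k N j k) ^+ 2.
    rewrite /rn mulr_sumr; apply: eq_bigr => j _; rewrite mxE -exprMn mulr_sumr.
    by congr (_ ^+ 2); apply: eq_bigr => k _; rewrite H0 mxE.
  set Q := \sum_j (\sum_k N j k) ^+ 2.
  have -> : n.+2%:R ^+ 2 * (t ^+ 2 * Q) = n.+2%:R * (t ^+ 2 * n.+2%:R) * Q by ring.
  by rewrite ht2 mulr1 sqr_sum_le.
Qed.

(* The factor [X] of [det_sqr_le_split] is at least [Y]; shrinking it by
   [K / Y] before applying AM-GM balances the [n + 2] factors at [K]. *)
Lemma det_sqr_le_total_sum n (N : 'M[R]_n.+2) (Y K : R) :
  0 < K <= Y -> n.+2%:R ^+ 2 * Y <= (\sum_i \sum_j N i j) ^+ 2 ->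
  \sum_i \sum_j N i j ^+ 2 = Y + n.+1%:R * K ->
  \det N ^+ 2 <= Y * K ^+ n.+1.
Proof.
move=> /andP[K0 KY] sum_ge sqsum.
have [X [c [detN c0 sqsumN sumN]]] := det_sqr_le_split N.
have Y0 : 0 < Y := lt_le_trans K0 KY.
have YX : Y <= X by rewrite -(ler_pM2l (exprn_gt0 2 (ltr0Sn R n.+1))) (le_trans sum_ge).
pose lam := K / Y.
have lam0 : 0 < lam by rewrite divr_gt0.
have lam1 : lam <= 1 by rewrite ler_pdivrMr // mul1r.
have lamY : lam * Y = K by rewrite mulfVK ?gt_eqF.
pose w (i : 'I_n.+2) := if unlift ord0 i is Some j then c j else lam * X.
have w0 i : 0 <= w i.
  rewrite /w; case: (unlift ord0 i) => [j|]; first exact: c0.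
  exact: mulr_ge0 (ltW lam0) (le_trans (ltW Y0) YX).
have prod_w : \prod_i w i = lam * X * \prod_i c i.
  by rewrite big_ord_recl /w unlift_none; congr (_ * _); apply: eq_bigr => i _; rewrite liftK.
have sum_w : \sum_i w i <= n.+2%:R * K.
  rewrite big_ord_recl /w unlift_none (eq_bigr c) => [|i _]; last by rewrite liftK.
  have -> : \sum_i c i = Y + n.+1%:R * K - X by rewrite -sqsum -sqsumN; ring.
  have : 0 <= (1 - lam) * (X - Y) by rewrite mulr_ge0 // subr_ge0.
  by rewrite -lamY -natr1; nra.
have : lam * (X * \prod_i c i) <= lam * (Y * K ^+ n.+1).
  rewrite mulrA -prod_w (le_trans (prod_le_mean_pow w0)) // mulrA lamY -exprS.
  apply: lerXn2r; rewrite ?nnegrE ?(ltW K0) //.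
    by rewrite divr_ge0 ?sumr_ge0.
  by rewrite ler_pdivrMr ?ltr0n // mulrC.
by rewrite ler_pM2l // => /(le_trans detN).
Qed.

End FirstRowSplit.

Lemma sqr_bound_shape (R : comPzRingType) (D q a s : R) m :
  (D ^+ m.+1 * q ^+ m.+1 * a * s ^+ m) ^+ 2
    = q ^+ 2 * D ^+ 2 * a ^+ 2 * (q ^+ 2 * D ^+ 2 * s ^+ 2) ^+ m.
Proof. by rewrite !exprMn !exprS -!exprM mulnC; ring. Qed.

Section Sums.

Variable R : rcfType.

Lemma sumr_nat N : \sum_(k < N) (k%:R : R) = N%:R * (N%:R - 1) / 2.
Proof.
elim: N => [|N IH]; first by rewrite big_ord0 !mul0r.
by rewrite big_ord_recr /= IH -natr1; field.
Qed.

Lemma sumr_nat_sqr N :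
  \sum_(k < N) (k%:R ^+ 2 : R) = N%:R * (N%:R - 1) * (2 * N%:R - 1) / 6.
Proof.
elim: N => [|N IH]; first by rewrite big_ord0 !mul0r.
by rewrite big_ord_recr /= IH -natr1; field.
Qed.

Lemma sum_entries_perm n (M : 'M[R]_n) p q (f : 'I_n * 'I_n -> 'I_(n * n)) :
  bijective f -> (forall i j, M i j = p + (f (i, j) : nat)%:R * q) ->
  forall F : R -> R, \sum_i \sum_j F (M i j) = \sum_(k < n * n) F (p + k%:R * q).
Proof.
move=> f_bij Mf F; rewrite pair_big /= (reindex f) /=; last exact: onW_bij.
by apply: eq_bigr => -[i j] _ /=; rewrite Mf.
Qed.

End Sums.

Section HalfPowers.

Variable R : rcfType.

Lemma ler_norm_sqr (a b : R) : 0 <= b -> a ^+ 2 <= b ^+ 2 -> `|a| <= b.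
Proof. by move=> b0; rewrite -ler_sqrt ?sqr_ge0 // !sqrtr_sqr [`|b|]ger0_norm. Qed.

Lemma halfpow_ge0 (x : R) k : 0 <= halfpow x k.
Proof. by rewrite exprn_ge0 ?sqrtr_ge0. Qed.

Lemma sqr_halfpow (x : R) k : 0 <= x -> halfpow x k ^+ 2 = x ^+ k.
Proof. by move=> x0; rewrite -exprM mulnC exprM sqr_sqrtr. Qed.

End HalfPowers.

Section PermutedProgression.

Variables (R : rcfType) (k : nat) (p q : R) (M : 'M[R]_k.+2).
Hypothesis q_gt0 : 0 < q.
Variable f : 'I_k.+2 * 'I_k.+2 -> 'I_(k.+2 * k.+2).
Hypothesis f_bij : bijective f.
Hypothesis Mf : forall i j, M i j = p + (f (i, j) : nat)%:R * q.

Local Notation n := k.+2.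
Local Notation r := (r_of n p q).
Local Notation rho := (rho_of R n).
Local Notation sigma := (sigma_of n p q).
Local Notation K := (q ^+ 2 * n%:R ^+ 2 * rho).
Local Notation Y := (q ^+ 2 * n%:R ^+ 2 * r ^+ 2).
Local Notation B := (n%:R ^+ n * q ^+ n * `|r| * halfpow rho n.-1).

Lemma sum_entries : \sum_i \sum_j M i j = n%:R ^+ 2 * q * r.
Proof.
rewrite (sum_entries_perm f_bij Mf id) big_split /= sumr_const card_ord.
rewrite -mulr_suml sumr_nat -mulr_natl natrM /r_of.
by field; rewrite gt_eqF.
Qed.

Lemma sum_sqr_entries : \sum_i \sum_j M i j ^+ 2 = n%:R * sigma.
Proof.
rewrite (sum_entries_perm f_bij Mf (fun x => x ^+ 2)).
transitivity (\sum_(l < n * n) (p ^+ 2 + 2 * p * q * l%:R + q ^+ 2 * l%:R ^+ 2)).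
  by apply: eq_bigr => l _; ring.
rewrite !big_split /= sumr_const card_ord -!mulr_sumr sumr_nat sumr_nat_sqr.
rewrite /sigma_of /r_of -mulr_natl natrM.
by field; rewrite gt_eqF.
Qed.

Lemma sigma_split : n%:R * sigma = Y + n.-1%:R * K.
Proof. by rewrite /sigma_of /rho_of -!natr1; field. Qed.

Lemma rho_gt0 : 0 < rho.
Proof. by rewrite divr_gt0 ?ltr0n // !addr_gt0 ?exprn_gt0 ?ltr0n. Qed.

Lemma sigma_ge0 : 0 <= sigma.
Proof.
apply: mulr_ge0; first by rewrite mulr_ge0 ?sqr_ge0.
by rewrite addr_ge0 ?sqr_ge0 // divr_ge0 // subr_ge0 exprn_ege1 ?ler1n.
Qed.

Lemma det_le_sigma : `|\det M| <= halfpow sigma n.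
Proof.
rewrite ler_norm_sqr ?halfpow_ge0 // sqr_halfpow ?sigma_ge0 //.
rewrite (le_trans (det_sqr_le_mean_pow M)) // sum_sqr_entries.
by rewrite [n%:R * _]mulrC mulfK ?pnatr_eq0.
Qed.

Lemma K_gt0 : 0 < K.
Proof. by rewrite mulr_gt0 ?rho_gt0 // mulr_gt0 ?exprn_gt0 ?ltr0n. Qed.

Lemma bound_ge0 : 0 <= B.
Proof.
have q0 : 0 <= q := ltW q_gt0.
by rewrite mulr_ge0 ?halfpow_ge0 // mulr_ge0 // mulr_ge0 // exprn_ge0.
Qed.

Lemma sqr_bound : B ^+ 2 = Y * K ^+ n.-1.
Proof.
by rewrite sqr_bound_shape real_normK ?num_real // sqr_sqrtr // (ltW rho_gt0).
Qed.

Lemma det_le_bound : rho <= r ^+ 2 -> `|\det M| <= B.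
Proof.
move=> rho_le; rewrite ler_norm_sqr ?bound_ge0 // sqr_bound.
apply: det_sqr_le_total_sum; last by rewrite sum_sqr_entries sigma_split.
  by rewrite K_gt0 ler_pM2l ?mulr_gt0 ?exprn_gt0 ?ltr0n.
by rewrite sum_entries le_eqVlt; apply/orP; left; apply/eqP; ring.
Qed.

Lemma bound_eq_sigma : r ^+ 2 = rho -> B = halfpow sigma n.
Proof.
move=> r2E; apply/eqP; rewrite -(eqrXn2 (ltn0Sn 1)) ?bound_ge0 ?halfpow_ge0 //.
rewrite sqr_bound sqr_halfpow ?sigma_ge0 //.
have -> : sigma = K.
  have n0 : n%:R != 0 :> R by rewrite pnatr_eq0.
  by apply: (mulfI n0); rewrite sigma_split r2E [n.-1]/= -natr1 mulrDl mul1r addrC.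
by rewrite r2E -exprS.
Qed.

Lemma bound_lt_sigma : rho < r ^+ 2 -> B < halfpow sigma n.
Proof.
move=> rho_lt; rewrite -(ltr_pXn2r (ltn0Sn 1)) ?nnegrE ?bound_ge0 ?halfpow_ge0 //.
rewrite sqr_halfpow ?sigma_ge0 // -(ltr_pM2l (exprn_gt0 n (ltr0Sn R k.+1))).
rewrite -[X in _ < X]exprMn sigma_split sqr_bound; apply: amgm_two_lt.
- by rewrite mulr_ge0 ?sqr_ge0 // mulr_ge0 ?sqr_ge0.
- exact: ltW K_gt0.
- by rewrite gt_eqF // ltr_pM2l // mulr_gt0 ?exprn_gt0 ?ltr0n.
Qed.

End PermutedProgression.

Theorem mainTheorem7 (R : rcfType) (n : nat) (p q : R) (M : 'M[R]_n)
  (hn : (2 <= n)%N) (hq : 0 < q)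
  (hM : exists f : 'I_n * 'I_n -> 'I_(n * n),
          bijective f /\ forall i j, M i j = p + (f (i, j) : nat)%:R * q) :
  let r := r_of n p q in
  let rho := rho_of R n in
  let sigma := sigma_of n p q in
  let B := n%:R ^+ n * q ^+ n * `|r| * halfpow rho n.-1 in
  [/\ r ^+ 2 < rho -> `|\det M| <= halfpow sigma n,
      r ^+ 2 = rho -> `|\det M| <= B /\ B = halfpow sigma n
    & rho < r ^+ 2 -> `|\det M| <= B /\ B < halfpow sigma n].
Proof.
case: n M hM hn => [|[|k]] M // [f [f_bij Mf]] _ r rho sigma B.
have det_le_S : `|\det M| <= halfpow sigma k.+2 := det_le_sigma hq f_bij Mf.
have det_le_B : rho <= r ^+ 2 -> `|\det M| <= B := det_le_bound hq f_bij Mf.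
have B_eq : r ^+ 2 = rho -> B = halfpow sigma k.+2 := bound_eq_sigma (p := p) hq.
have B_lt : rho < r ^+ 2 -> B < halfpow sigma k.+2 := bound_lt_sigma (p := p) hq.
split=> [// | r2E | rho_lt].
- by rewrite det_le_B ?r2E // B_eq.
- by rewrite det_le_B ?ltW // B_lt.
Qed.
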